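(* Let $R_1,R_2$ be commutative multiplicative hyperrings with identity, and let $f:R_1\to R_2$ be a good homomorphism. Let $\alpha_1$ be a good endomorphism of $R_1$ and $\alpha_2$ a good endomorphism of $R_2$ with $\alpha_2(f(r))=f(\alpha_1(r))$ for every $r\in R_1$. If $I_2$ is an $\alpha_2$-prime hyperideal of $R_2$, then $f^{-1}(I_2)$ is an $\alpha_1$-prime hyperideal of $R_1$.
   Context: A multiplicative hyperring is an abelian group $(R,+)$ with a hyperoperation $\circ:R\times R\to \mathcal P^*(R)$ (nonempty subsets) such that $a\circ(b\circ c)=(a\circ b)\circ c$, $a\circ(b+c)\subseteq a\circ b+a\circ c$, $(b+c)\circ a\subseteq b\circ a+c\circ a$, and $a\circ(-b)=(-a)\circ b=-(a\circ b)$. Products of subsets are unions of elementwise products. Commutative means $a\circ b=b\circ a$. An identity $1$ satisfies $a\in 1\circ a$ for all $a$. A hyperideal is a nonempty $I$ closed under subtraction with $r\circ x\subseteq I$ for $r\in R$, $x\in I$. Standing assumption: all hyperideals are $\mathbf C$-hyperideals, i.e. for every finite product $A=r_1\circ\cdots\circ r_n$, $A\cap I\ne\emptyset$ implies $A\subseteq I$. A good homomorphism $f$ satisfies $f(x+y)=f(x)+f(y)$ and $f(x\circ y)=f(x)\circ f(y)$; a good endomorphism is a good homomorphism $R\to R$. For a good endomorphism $\alpha$, a hyperideal $I$ is $\alpha$-prime if for all $x,y$, $x\circ y\subseteq I$ implies $x\in I$ or $\alpha(y)\in I$. *)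

From HB Require Import structures.
From mathcomp Require Import all_boot all_algebra.
Set Implicit Arguments. Unset Strict Implicit. Unset Printing Implicit Defensive.
Import GRing.Theory.
Local Open Scope ring_scope.

Definition hset (T : Type) := T -> Prop.

(* A hyperoperation: [hop x y z] means z \in x o y. *)
Definition hop (R : Type) := R -> R -> hset R.

Section Hyper.
Variables (R : zmodType) (m : hop R).

Definition hsub (A B : hset R) := forall z, A z -> B z.
Definition hseteq (A B : hset R) := hsub A B /\ hsub B A.

Definition hsetD (A B : hset R) : hset R :=
  fun z => exists a b, A a /\ B b /\ z = a + b.
Definition hsetN (A : hset R) : hset R := fun z => A (- z).
Definition hsetM (A B : hset R) : hset R :=
  fun z => exists a b, A a /\ B b /\ m a b z.
Definition hsing (x : R) : hset R := fun z => z = x.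

(* finite product r1 o r2 o ... o rn  (n >= 1), i.e. x o s_1 o ... o s_k *)
Definition hprod (x : R) (s : seq R) : hset R :=
  foldl (fun A y => hsetM A (hsing y)) (hsing x) s.

Definition is_mhyperring : Prop :=
  [/\ (forall a b, exists z, m a b z),
      (forall a b c, hseteq (hsetM (hsing a) (m b c)) (hsetM (m a b) (hsing c))),
      (forall a b c, hsub (m a (b + c)) (hsetD (m a b) (m a c))),
      (forall a b c, hsub (m (b + c) a) (hsetD (m b a) (m c a))) &
      (forall a b, hseteq (m a (- b)) (hsetN (m a b)) /\
                   hseteq (m (- a) b) (hsetN (m a b)))].

Definition hcommutative : Prop := forall a b, hseteq (m a b) (m b a).

Definition has_identity : Prop := exists e : R, forall a, m e a a.

(* hyperideal; by the standing assumption every hyperideal is a C-hyperideal *)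
Definition C_property (I : hset R) : Prop :=
  forall x s, (exists z, hprod x s z /\ I z) -> hsub (hprod x s) I.

Definition hyperideal (I : hset R) : Prop :=
  [/\ exists x, I x,
      (forall x y, I x -> I y -> I (x - y)),
      (forall r x, I x -> hsub (m r x) I) &
      C_property I].

Definition alpha_prime (alpha : R -> R) (I : hset R) : Prop :=
  hyperideal I /\
  forall x y, hsub (m x y) I -> I x \/ I (alpha y).

End Hyper.

Definition good_hom (R1 R2 : zmodType) (m1 : hop R1) (m2 : hop R2)
  (f : R1 -> R2) : Prop :=
  (forall x y, f (x + y) = f x + f y) /\
  (forall x y z, m2 (f x) (f y) z <-> exists w, m1 x y w /\ z = f w).

Definition preimage (R1 R2 : Type) (f : R1 -> R2) (I : hset R2) : hset R1 :=
  fun x => I (f x).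

(* A good homomorphism maps products of elements onto products of their images
   and commutes with the endomorphisms, so every defining property of an
   alpha_2-prime hyperideal pulls back along f; in particular the C-property
   transfers because f sends r_1 o ... o r_n into f(r_1) o ... o f(r_n).
   None of the hyperring axioms, commutativity or identities are needed. *)
From mathcomp Require Import all_boot all_algebra.
Import GRing.Theory.
Local Open Scope ring_scope.

Set Implicit Arguments.

Section GoodHom.
Variables (R1 R2 : zmodType) (m1 : hop R1) (m2 : hop R2) (f : R1 -> R2).
Hypothesis hf : good_hom m1 m2 f.

Lemma good_hom0 : f 0 = 0.
Proof. by apply: (addrI (f 0)); rewrite addr0 -(proj1 hf) addr0. Qed.

Lemma good_homN x : f (- x) = - f x.
Proof. by apply/eqP; rewrite -subr_eq0 opprK -(proj1 hf) addNr good_hom0. Qed.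

Lemma good_homB x y : f (x - y) = f x - f y.
Proof. by rewrite (proj1 hf) good_homN. Qed.

Lemma good_hom_mul x y w : m1 x y w -> m2 (f x) (f y) (f w).
Proof. by move=> mxyw; apply/(proj2 hf); exists w. Qed.

Lemma good_hom_hsetM (A A' : hset R1) (B B' : hset R2) z :
  (forall a, A a -> B (f a)) -> (forall a, A' a -> B' (f a)) ->
  hsetM m1 A A' z -> hsetM m2 B B' (f z).
Proof.
move=> fAB fAB' [a [a' [Aa [A'a' maa'z]]]].
by exists (f a), (f a'); split; [exact: fAB | split; [exact: fAB' | exact: good_hom_mul]].
Qed.

Lemma good_hom_hprod x s z : hprod m1 x s z -> hprod m2 (f x) (map f s) (f z).
Proof.
have fx a : hsing x a -> hsing (f x) (f a) by move->.
rewrite /hprod; move: (hsing x) (hsing (f x)) fx.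
elim: s z => [|y s IHs] z A B fAB /=; first exact: fAB.
apply: IHs => w; apply: good_hom_hsetM => // a ->; reflexivity.
Qed.

Lemma preimage_C_property (I : hset R2) :
  C_property m2 I -> C_property m1 (preimage f I).
Proof.
move=> CI x s [z [xsz Ifz]] w xsw.
apply: (CI (f x) (map f s)); last exact: good_hom_hprod.
by exists (f z); split; first exact: good_hom_hprod.
Qed.

Lemma preimage_hyperideal (I : hset R2) :
  hyperideal m2 I -> hyperideal m1 (preimage f I).
Proof.
case=> [[u Iu] IB Imul CI]; split.
- by exists 0; rewrite /preimage good_hom0 -(subrr u); apply: IB.
- by move=> y z Iy Iz; rewrite /preimage good_homB; apply: IB.
- by move=> r y Iy w /good_hom_mul; apply: Imul.
- exact: preimage_C_property.
Qed.

End GoodHom.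

Theorem mainTheorem11 (R1 R2 : zmodType) (m1 : hop R1) (m2 : hop R2)
  (H1 : is_mhyperring m1) (C1 : hcommutative m1) (E1 : has_identity m1)
  (H2 : is_mhyperring m2) (C2 : hcommutative m2) (E2 : has_identity m2)
  (f : R1 -> R2) (hf : good_hom m1 m2 f)
  (alpha1 : R1 -> R1) (ha1 : good_hom m1 m1 alpha1)
  (alpha2 : R2 -> R2) (ha2 : good_hom m2 m2 alpha2)
  (hcomm : forall r, alpha2 (f r) = f (alpha1 r))
  (I2 : hset R2) (hI2 : alpha_prime m2 alpha2 I2) :
  alpha_prime m1 alpha1 (preimage f I2).
Proof.
case: hI2 => [idealI2 primeI2]; split; first exact: (preimage_hyperideal hf).
move=> x y xy_sub.
have fxy_sub : hsub (m2 (f x) (f y)) I2.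
  by move=> z /(proj2 hf) [w [mxyw ->]]; exact: xy_sub.
case: (primeI2 _ _ fxy_sub) => [Ifx | Ifay]; [by left | right].
by rewrite /preimage -hcomm.
Qed.
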